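(* There exists $p\in\mathcal P$ such that $D_{\mu(p)}(p)\neq N$ and $D_{\mu(p)}(p)\cap D_{\mu(p^r)}(p^r)\neq\varnothing$ if and only if $(h,n)\notin T_3$, where $T_3=\{(h,n): n=2\}\cup\{(3,3)\}$.
   Context: Let $n,h\ge2$ be integers, $N=\{1,\dots,n\}$, $H=\{1,\dots,h\}$. $\mathcal P$ is the set of $h$-tuples $p=(p_1,\dots,p_h)$ of linear orders on $N$; $p^r$ is obtained by reversing each $p_i$; $x>_{p_i}y$ means $x\ne y$ and $p_i$ ranks $x$ above $y$. For an integer $\mu$ with $h/2<\mu\le h$, $D_\mu(p)=\{x\in N: \forall y\in N,\ |\{i: y>_{p_i}x\}|<\mu\}$, and $\mu(p)=\min\{\mu\in\mathbb N\cap(h/2,h]: D_\mu(p)\neq\varnothing\}$. *)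

From mathcomp Require Import all_boot all_fingroup zify.
Set Implicit Arguments.
Unset Strict Implicit.
Unset Printing Implicit Defensive.

(* A linear order on N = 'I_n is represented by a permutation s : {perm 'I_n}
   giving the rank (position) of each alternative: position 0 is the top. *)
Definition profile (n h : nat) := {ffun 'I_h -> {perm 'I_n}}.

Definition above n (s : {perm 'I_n}) (x y : 'I_n) : bool := s x < s y.

Definition rev_perm n : {perm 'I_n} := perm (@rev_ord_inj n).

Definition rev_prof n h (p : profile n h) : profile n h :=
  [ffun i => (p i * rev_perm n)%g].

Lemma above_rev n h (p : profile n h) i x y :
  above (rev_prof p i) x y = above (p i) y x.
Proof.
rewrite /above /rev_prof !ffunE !permM /rev_perm !permE /=.
case: (p i x) => a Ha; case: (p i y) => b Hb /=.
apply/idP/idP => H; lia.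
Qed.

Definition D n h (mu : nat) (p : profile n h) : {set 'I_n} :=
  [set x | [forall y, #|[set i | above (p i) y x]| < mu]].

Definition muP n h (p : profile n h) (m : nat) : bool :=
  [&& h < 2 * m, m <= h & D m p != set0].

Lemma muP_ex n h (p : profile n h) :
  [exists m : 'I_h.+1, muP p m] -> exists m, muP p m.
Proof. by case/existsP=> m Hm; exists m. Qed.

(* mu(p) = min { mu in N cap (h/2, h] | D_mu(p) <> empty }.
   (The set is nonempty whenever n, h >= 1; the default 0 is never used
   under the standing assumptions n, h >= 2.) *)
Definition mu n h (p : profile n h) : nat :=
  match @idP [exists m : 'I_h.+1, muP p m] with
  | ReflectT H => ex_minn (muP_ex H)
  | ReflectF _ => 0
  end.

From mathcomp Require Import all_boot all_fingroup zify.
Set Implicit Arguments. Unset Strict Implicit. Unset Printing Implicit Defensive.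

(* Let votes p y x be the number of voters ranking y above x, so that D_m(p)
   consists of the alternatives beaten by no alternative with m votes, and
   reversing the profile swaps the two arguments of votes.

   Adding two voters with opposite rankings raises every votes p y x (y <> x)
   by one; it therefore raises mu(p) and mu(p^r) by one and leaves both sets
   D_mu unchanged.  Hence a suitable profile with h voters yields one with h+2
   voters, and it suffices to exhibit profiles for h = 2 (n >= 3), h = 3
   (n >= 4) and (h, n) = (5, 3).

   Conversely, for n = 2 let x be a common element and z an alternative
   outside D_mu(p)(p); then x beats z by at least mu(p) votes, z lies in
   D_mu(p)(p^r), and mu(p^r) <= mu(p) <= votes p x z < mu(p^r).  For
   h = n = 3 the majority relation has a Condorcet winner iff it has a
   Condorcet loser, so mu(p) = mu(p^r).  If both equal 2, a common element
   would be a Condorcet winner and a Condorcet loser at once; if both equal 3,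
   the majority relation is a cycle, no alternative is then Pareto dominated,
   and D_3(p) = N. *)

Definition votes n h (p : profile n h) (y x : 'I_n) : nat :=
  #|[set i | above (p i) y x]|.

Definition good n h (p : profile n h) :=
  D (mu p) p != [set: 'I_n] /\
  D (mu p) p :&: D (mu (rev_prof p)) (rev_prof p) != set0.

Lemma rev_permK n : (rev_perm n * rev_perm n = 1)%g.
Proof. by apply/permP => i; rewrite permM perm1 !permE rev_ordK. Qed.

Lemma rev_profK n h : involutive (@rev_prof n h).
Proof.
by move=> p; apply/ffunP => i; rewrite !ffunE -mulgA rev_permK mulg1.
Qed.

Section Votes.
Variables n h : nat.
Implicit Types p : profile n h.

Lemma votesE p y x : votes p y x = \sum_(i < h) above (p i) y x.
Proof.
rewrite /votes -sum1_card big_mkcond /=.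
by apply: eq_bigr => i _; rewrite inE; case: above.
Qed.

Lemma inDP m p x : reflect (forall y, votes p y x < m) (x \in D m p).
Proof. by rewrite inE; apply: forallP. Qed.

Lemma notin_DP m p x : reflect (exists y, m <= votes p y x) (x \notin D m p).
Proof.
rewrite inE negb_forall; apply: (iffP existsP) => -[y].
  by rewrite -leqNgt; exists y.
by rewrite leqNgt; exists y.
Qed.

Lemma D_subset k m p : k <= m -> D k p \subset D m p.
Proof.
move=> le_km; apply/subsetP => x /inDP lt_k; apply/inDP => y.
exact: leq_trans (lt_k y) le_km.
Qed.

Lemma votes_rev p y x : votes (rev_prof p) y x = votes p x y.
Proof. by apply: eq_card => i; rewrite !inE above_rev. Qed.

Lemma votesxx p x : votes p x x = 0.
Proof. by rewrite votesE big1 // => i _; rewrite /above ltnn. Qed.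

Lemma votesC p x y : x != y -> votes p x y + votes p y x = h.
Proof.
move=> neq_xy; rewrite /votes.
have -> : [set i | above (p i) y x] = ~: [set i | above (p i) x y].
  apply/setP => i; rewrite !inE /above -leqNgt ltn_neqAle andb_idl // => _.
  by rewrite eq_sym val_eqE (inj_eq perm_inj).
by rewrite cardsC card_ord.
Qed.

Lemma votes_trans p u v w : votes p u v + votes p v w <= h + votes p u w.
Proof.
rewrite /votes -cardsUI.
apply: leq_add; first by apply: leq_trans (max_card _) _; rewrite card_ord.
apply: subset_leq_card; apply/subsetP => i.
rewrite !inE /above => /andP [lt_uv lt_vw]; exact: ltn_trans lt_uv lt_vw.
Qed.

Lemma votes_ltn p y x i : ~~ above (p i) y x -> votes p y x < h.
Proof.
move=> not_above; rewrite /votes -[X in _ < X]card_ord -cardsT; apply: proper_card.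
by rewrite properT; apply: contra not_above => /eqP/setP/(_ i); rewrite !inE.
Qed.

End Votes.

Section Mu.
Variables n h : nat.
Implicit Types p : profile n h.

Lemma muP_exists p m : muP p m -> [exists k : 'I_h.+1, muP p k].
Proof.
move=> mP; have /and3P [_ le_mh _] := mP.
by apply/existsP; exists (Ordinal (le_mh : m < h.+1)).
Qed.

Lemma mu_le p m : muP p m -> mu p <= m.
Proof.
move=> mP; rewrite /mu; destruct (@idP [exists k : 'I_h.+1, muP p k]) as [ex | nex];
  last by case: nex; apply: muP_exists mP.
by case: ex_minnP => k _; apply.
Qed.

Lemma muP_min p m : muP p m -> muP p (mu p).
Proof.
move=> mP; rewrite /mu; destruct (@idP [exists k : 'I_h.+1, muP p k]) as [ex | nex];
  last by case: nex; apply: muP_exists mP.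
by case: ex_minnP.
Qed.

Lemma muP_top p : 0 < n -> 0 < h -> muP p h.
Proof.
move=> n_gt0 h_gt0; rewrite /muP leqnn ltn_Pmull //=.
pose i0 := Ordinal h_gt0; apply/set0Pn; exists ((p i0)^-1 (Ordinal n_gt0))%g.
by apply/inDP => y; apply: (votes_ltn (i := i0)); rewrite /above permKV ltn0.
Qed.

Lemma muP_mu p : 0 < n -> 0 < h -> muP p (mu p).
Proof. by move=> n_gt0 h_gt0; apply: muP_min (muP_top p n_gt0 h_gt0). Qed.

(* D_k p grows with k, so it suffices to rule out the admissible value just
   below m. *)
Lemma mu_eq p m :
  muP p m -> (h < 2 * m.-1 -> D m.-1 p = set0) -> mu p = m.
Proof.
move=> mP below; apply/eqP; rewrite eqn_leq mu_le //= leqNgt; apply/negP => lt_mu.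
have /and3P [h_lt _ D_mu] := muP_min mP.
have le_mu : mu p <= m.-1 by lia.
have D_below : D m.-1 p = set0 by apply: below; lia.
by move: (D_subset p le_mu); rewrite D_below subset0 (negbTE D_mu).
Qed.
End Mu.

Section Lift.
Variables (n h : nat) (p : profile n h) (q : profile n h.+2).
Hypothesis votes_q : forall y x, votes q y x = (x != y) + votes p y x.
Hypotheses (n_gt0 : 0 < n) (h_gt0 : 0 < h).

Lemma D_lift k : 0 < k -> D k.+1 q = D k p.
Proof.
move=> k_gt0; apply/setP => x; apply/inDP/inDP => lt_k y; have := lt_k y;
  rewrite votes_q; case: eqP => [->|_] /=; rewrite ?votesxx; lia.
Qed.

Lemma mu_lift : mu q = (mu p).+1.
Proof.
have /and3P [h_lt mu_le_h D_mu] := muP_mu p n_gt0 h_gt0.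
have mu_gt0 : 0 < mu p by lia.
apply: mu_eq => [|h_lt'].
  by rewrite /muP D_lift // D_mu andbT; apply/andP; split; lia.
rewrite /= -[mu p]prednK // D_lift; last by lia.
apply/eqP; apply: contraTT (leqnn (mu p)) => D_ne; rewrite -ltnNge.
have : muP p (mu p).-1 by rewrite /muP D_ne andbT; apply/andP; split; lia.
move/mu_le; lia.
Qed.

Lemma D_mu_lift : D (mu q) q = D (mu p) p.
Proof.
have /and3P [h_lt _ _] := muP_mu p n_gt0 h_gt0.
by rewrite mu_lift D_lift //; lia.
Qed.

End Lift.

Definition liftp n h (p : profile n h) : profile n h.+2 :=
  [ffun i : 'I_(2 + h) => match split i with
                         | inl j => if j == ord0 then 1%g else rev_perm n
                         | inr k => p k
                         end].

Lemma votes_liftp n h (p : profile n h) y x :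
  votes (liftp p) y x = (x != y) + votes p y x.
Proof.
rewrite !votesE (@big_split_ord _ _ _ 2 h) /= !big_ord_recr big_ord0 /=.
rewrite !ffunE -![lshift _ _]/(unsplit (inl _ _)) !unsplitK /=.
congr (_ + _); last first.
  by apply: eq_bigr => i _; rewrite ffunE -[rshift _ _]/(unsplit (inr _ _)) unsplitK.
rewrite /above perm1 !permE /= -val_eqE /=.
have := ltn_ord x; have := ltn_ord y; case: ltngtP; lia.
Qed.

Lemma good_liftp n h (p : profile n h) : 0 < n -> 0 < h -> good p -> good (liftp p).
Proof.
move=> n_gt0 h_gt0.
have D_p := D_mu_lift (votes_liftp p) n_gt0 h_gt0.
have D_rp : D (mu (rev_prof (liftp p))) (rev_prof (liftp p)) =
              D (mu (rev_prof p)) (rev_prof p).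
  by apply: D_mu_lift => // y x; rewrite !votes_rev votes_liftp eq_sym.
by rewrite /good D_p D_rp.
Qed.

Lemma ord2_eq (a b c : 'I_2) : a != c -> b != c -> a = b.
Proof.
rewrite -!val_eqE; case: a b c => [a ?] [b ?] [c ?] /= *.
by apply: val_inj => /=; lia.
Qed.

Lemma ord3_eq (a b c y : 'I_3) :
  a != b -> a != c -> b != c -> y != a -> y != b -> y = c.
Proof.
rewrite -!val_eqE; case: a b c y => [a ?] [b ?] [c ?] [y ?] /= *.
by apply: val_inj => /=; lia.
Qed.

Lemma exists_neq n (c : 'I_n.+2) : exists a, a != c.
Proof.
exists (if c == ord0 then ord_max else ord0).
by case: (eqVneq c ord0) => [->|]; rewrite // eq_sym.
Qed.

Lemma not_good_two h (p : profile 2 h) : 0 < h -> ~ good p.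
Proof.
move=> h_gt0 [D_ne /set0Pn [x]]; rewrite in_setI => /andP [/inDP x_win /inDP x_rwin].
set m := mu p in D_ne x_win.
have /and3P [h_lt m_le _] := muP_mu p isT h_gt0.
have /subsetPn [z _ /notin_DP [w le_wz]] : ~~ ([set: 'I_2] \subset D m p).
  by rewrite subTset.
have w_z : w != z by apply: contraTneq le_wz => ->; rewrite votesxx; lia.
have x_z : x != z by apply: contraTneq le_wz => <-; rewrite -ltnNge.
have w_x := ord2_eq w_z x_z; subst w.
have z_rwin : muP (rev_prof p) m.
  rewrite /muP h_lt m_le; apply/set0Pn; exists z; apply/inDP => y.
  rewrite votes_rev; case: (eqVneq y z) => [->|y_z]; first by rewrite votesxx; lia.
  by rewrite (ord2_eq y_z x_z); have := votesC p x_z; lia.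
by have := mu_le z_rwin; have := x_rwin z; rewrite votes_rev; lia.
Qed.

Lemma winner33 (p : profile 3 3) x w z :
  x != w -> x != z -> w != z -> 2 <= votes p x w -> 2 <= votes p x z -> x \in D 2 p.
Proof.
move=> x_w x_z w_z le_xw le_xz; apply/inDP => y.
case: (eqVneq y x) => [->|y_x]; first by rewrite votesxx.
case: (eqVneq y w) => [->|y_w]; first by have := votesC p x_w; lia.
by rewrite (ord3_eq x_w x_z w_z y_x y_w); have := votesC p x_z; lia.
Qed.

Lemma winner_loser33 (p : profile 3 3) : D 2 p != set0 -> D 2 (rev_prof p) != set0.
Proof.
case/set0Pn => c /inDP c_win; have [a a_c] := exists_neq c.
apply/set0Pn; case: (boolP (a \in D 2 (rev_prof p))) => [a_rwin|]; first by exists a.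
case/notin_DP => b; rewrite votes_rev => le_ab; exists b.
have b_a : b != a by apply: contraTneq le_ab => ->; rewrite votesxx.
have b_c : b != c by apply: contraTneq le_ab => ->; rewrite -ltnNge c_win.
have le_cb : 2 <= votes p c b by have := votesC p b_c; have := c_win b; lia.
by apply: winner33 b_a b_c a_c _ _; rewrite votes_rev.
Qed.

Lemma mu33 (p : profile 3 3) : mu p = if D 2 p == set0 then 3 else 2.
Proof.
case: eqP => [D2_0|/eqP D2_ne]; apply: mu_eq => //; exact: muP_top.
Qed.

Lemma mu_rev33 (p : profile 3 3) : mu (rev_prof p) = mu p.
Proof.
rewrite !mu33; suff -> : (D 2 (rev_prof p) == set0) = (D 2 p == set0) by [].
apply/idP/idP; apply: contraLR; first exact: winner_loser33.
by rewrite -{2}(rev_profK p) => /winner_loser33.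
Qed.

Lemma D3_full33 (p : profile 3 3) : D 2 p = set0 -> D 3 p = [set: 'I_3].
Proof.
move=> D2_0; apply/setP => z; rewrite in_setT; apply/inDP => w; rewrite ltnNge.
apply/negP => le_wz; have w_z : w != z by apply: contraTneq le_wz => ->; rewrite votesxx.
have /notin_DP [t le_tw] : w \notin D 2 p by rewrite D2_0 inE.
have t_w : t != w by apply: contraTneq le_tw => ->; rewrite votesxx.
have t_z : t != z by apply: contraTneq le_tw => ->; have := votesC p w_z; lia.
suff : t \in D 2 p by rewrite D2_0 inE.
have le_tz : 2 <= votes p t z by have := votes_trans p t w z; lia.
exact: winner33 t_w t_z w_z le_tw le_tz.
Qed.

Lemma not_good33 (p : profile 3 3) : ~ good p.
Proof.
case=> D_ne /set0Pn [x]; rewrite in_setI mu_rev33; rewrite mu33 in D_ne *.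
case: ifP => [/eqP D2_0|_] in D_ne *; first by rewrite D3_full33 // eqxx in D_ne.
case/andP => /inDP x_win /inDP x_rwin; have [y y_x] := exists_neq x.
by have := votesC p y_x; have := x_win y; have := x_rwin y; rewrite votes_rev; lia.
Qed.

Lemma good_intro n h (p : profile n h) x z :
  x \in D (mu p) p -> x \in D (mu (rev_prof p)) (rev_prof p) ->
  z \notin D (mu p) p -> good p.
Proof.
move=> x_win x_rwin z_lose; split.
  by apply: contraNneq z_lose => ->; rewrite inE.
by apply/set0Pn; exists x; rewrite in_setI; apply/andP.
Qed.

Definition profile_of {n h} (s : seq {perm 'I_n}) : profile n h :=
  [ffun i : 'I_h => nth 1%g s i].

Section Rotation.
Variable n : nat.

Definition rot : {perm 'I_n.+1} := perm (@ordS_inj n.+1).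

Lemma rotE (i : 'I_n.+1) : rot i = (if i == n :> nat then 0 else i.+1) :> nat.
Proof.
rewrite permE /=; case: eqP => [->|i_n]; first by rewrite modnn.
by rewrite modn_small //; have := ltn_ord i; lia.
Qed.

Lemma rotVE (i : 'I_n.+1) : (rot^-1)%g i = (if i == 0 :> nat then n else i.-1) :> nat.
Proof.
have := rotE ((rot^-1)%g i); rewrite permKV; have := ltn_ord ((rot^-1)%g i).
by case: eqP; case: eqP; lia.
Qed.

Lemma swapE (i : 'I_n.+1) :
  tperm ord0 ord_max i =
    (if i == 0 :> nat then n else if i == n :> nat then 0 else i) :> nat.
Proof.
by rewrite permE /= -!val_eqE /=; case: eqP => //; case: eqP.
Qed.

End Rotation.

Ltac nat_cases :=
  repeat match goal with
         | |- context [if ?a == ?b then _ else _] => case: (@eqP nat a b)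
         end;
  lia.

(* Rankings, best first: 0 > 1 > ... > n and n > 0 > 1 > ... > n-1. *)
Definition prof2 n : profile n.+1 2 := profile_of [:: 1; rot n]%g.

Lemma votes_prof2 n y x :
  votes (prof2 n) y x = (y < x) + (rot n y < rot n x).
Proof. by rewrite votesE !big_ord_recr big_ord0 /= !ffunE /= /above !perm1. Qed.

Lemma good_prof2 n : good (prof2 n.+2).
Proof.
have x_win : ord_max \in D 2 (prof2 n.+2).
  apply/inDP => y; rewrite votes_prof2 !rotE /=; have := ltn_ord y; nat_cases.
have x_rwin : ord_max \in D 2 (rev_prof (prof2 n.+2)).
  apply/inDP => y; rewrite votes_rev votes_prof2 !rotE /=; have := ltn_ord y; nat_cases.
have mu2 (q : profile n.+3 2) : ord_max \in D 2 q -> mu q = 2.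
  by move=> x_in; apply: mu_eq => //; rewrite /muP /=; apply/set0Pn; exists ord_max.
apply: (good_intro (x := ord_max) (z := inord 1)); rewrite ?mu2 //.
by apply/negP => /inDP /(_ ord0); rewrite votes_prof2 !rotE inordK.
Qed.

(* Rankings, best first: 0 > 1 > ... > n, 0 > 2 > ... > n > 1 and
   n > 1 > ... > n-1 > 0.  Alternative 0 is a Condorcet winner, while
   1, 2, ..., n form a majority cycle, so there is no Condorcet loser. *)
Definition prof3 n : profile n.+1 3 :=
  profile_of [:: 1; (rot n)^-1 * tperm ord0 ord_max; tperm ord0 ord_max]%g.

Lemma votes_prof3 n y x :
  votes (prof3 n) y x =
    (y < x) + (tperm ord0 ord_max ((rot n)^-1 y) < tperm ord0 ord_max ((rot n)^-1 x))%g
            + (tperm ord0 ord_max y < tperm ord0 ord_max x).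
Proof. by rewrite votesE !big_ord_recr big_ord0 /= !ffunE /= /above !perm1 !permM. Qed.

Lemma good_prof3 n : good (prof3 n.+3).
Proof.
have x_win : ord0 \in D 2 (prof3 n.+3).
  apply/inDP => y; rewrite votes_prof3 !swapE !rotVE /=; have := ltn_ord y; nat_cases.
have x_rwin : ord0 \in D 3 (rev_prof (prof3 n.+3)).
  apply/inDP => y; rewrite votes_rev votes_prof3 !swapE !rotVE /=.
  by have := ltn_ord y; nat_cases.
have mu2 : mu (prof3 n.+3) = 2.
  by apply: mu_eq => //; rewrite /muP /=; apply/set0Pn; exists ord0.
have mu3 : mu (rev_prof (prof3 n.+3)) = 3.
  apply: mu_eq => [|_]; first by rewrite /muP /=; apply/set0Pn; exists ord0.
  apply/eqP; rewrite -subset0; apply/subsetP => u /inDP.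
  move/(_ (inord (if u == n.+3 :> nat then 1 else u.+1))).
  rewrite votes_rev votes_prof3 !swapE !rotVE inordK; have := ltn_ord u; nat_cases.
apply: (good_intro (x := ord0) (z := inord 1)); rewrite ?mu2 ?mu3 //.
by apply/negP => /inDP /(_ ord0); rewrite votes_prof3 !swapE !rotVE inordK //=; nat_cases.
Qed.

(* Rankings, best first: 0 > 1 > 2 twice, 2 > 0 > 1 twice and 1 > 2 > 0. *)
Definition prof5 : profile 3 5 := profile_of [:: 1; 1; rot 2; rot 2; (rot 2)^-1]%g.

Lemma votes_prof5 y x :
  votes prof5 y x =
    (y < x).*2 + (rot 2 y < rot 2 x).*2 + ((rot 2)^-1 y < (rot 2)^-1 x)%g.
Proof.
by rewrite votesE !big_ord_recr big_ord0 /= !ffunE /= /above !perm1 -!addnn !addnA.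
Qed.

Lemma good_prof5 : good prof5.
Proof.
have x_win : ord_max \in D 4 prof5.
  apply/inDP => y; rewrite votes_prof5 !rotE !rotVE /=; have := ltn_ord y; nat_cases.
have x_rwin : ord_max \in D 4 (rev_prof prof5).
  apply/inDP => y; rewrite votes_rev votes_prof5 !rotE !rotVE /=.
  by have := ltn_ord y; nat_cases.
have mu4 (q : profile 3 5) (q_votes : forall u, exists y, 3 <= votes q y u) :
    ord_max \in D 4 q -> mu q = 4.
  move=> x_in; apply: mu_eq => [|_].
    by rewrite /muP /=; apply/set0Pn; exists ord_max.
  apply/eqP; rewrite -subset0; apply/subsetP => u /inDP.
  by have [y le_yu] := q_votes u => /(_ y); rewrite ltnNge le_yu.
have mu_p : mu prof5 = 4.
  apply: mu4 => // u; exists ((rot 2)^-1 u)%g.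
  rewrite votes_prof5 permKV !rotE !rotVE; have := ltn_ord u; nat_cases.
have mu_rp : mu (rev_prof prof5) = 4.
  apply: mu4 => // u; exists (rot 2 u); rewrite votes_rev.
  rewrite votes_prof5 permK !rotE !rotVE; have := ltn_ord u; nat_cases.
apply: (good_intro (x := ord_max) (z := inord 1)); rewrite ?mu_p ?mu_rp //.
by apply/negP => /inDP /(_ ord0); rewrite votes_prof5 !rotE !rotVE inordK //=; nat_cases.
Qed.

Lemma good_exists n h :
  3 <= n -> 2 <= h -> ~ (h = 3 /\ n = 3) -> exists p : profile n h, good p.
Proof.
case: n => [|[|[|n]]] // _; elim/ltn_ind: h => h IH le2h not33.
have [h2 | h_ne2] := eqVneq h 2.
  by subst h; exists (prof2 n.+2); exact: good_prof2.
have [h3 | h_ne3] := eqVneq h 3.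
  subst h; case: n IH not33 => [|n] _ not33; first by case: not33.
  by exists (prof3 n.+3); exact: good_prof3.
have [[-> ->] | not_5_3] : h = 5 /\ n = 0 \/ ~ (h.-2 = 3 /\ n.+3 = 3) by lia.
  by exists prof5; exact: good_prof5.
have [k hk] : exists k, h = k.+2 by exists h.-2; lia.
subst h; have [p good_p] : exists p : profile n.+3 k, good p by apply: IH; lia.
by exists (liftp p); apply: good_liftp => //; lia.
Qed.

Theorem proposition5 (n h : nat) (hn : 2 <= n) (hh : 2 <= h) :
  (exists p : profile n h,
      D (mu p) p != [set: 'I_n] /\
      D (mu p) p :&: D (mu (rev_prof p)) (rev_prof p) != set0)
  <-> ~ (n = 2 \/ (h = 3 /\ n = 3)).
Proof.
split => [[p good_p] [n2 | [h3 n3]] | not_excluded].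
- by subst n; apply: (not_good_two _ good_p); lia.
- by subst n h; apply: not_good33 good_p.
- by apply: good_exists; lia.
Qed.
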